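(* Fix $\epsilon>0$, $\delta>0$ and an integer $L\geq 2$ such that $2\epsilon<\delta\leq 1/L$, and suppose the prior distribution of $v^*$ is uniform on $[0,1)$. Then \[ \log\frac{1}{\epsilon}\ \leq\ N_B^*(\epsilon,\delta,L)\ \leq\ L\log\frac{1}{L\epsilon}+L-1 . \]
   Context: Bayesian private learning model. The true value $v^*$ is random with a prior distribution $P_{v^*}$ on $[0,1)$ known to everyone. A learner submits queries $q_k\in[0,1)$ and receives $r_k=\mathbb{I}(v^*\geq q_k)$. A learner strategy $\phi$ of length $N$ (which may depend on $P_{v^*}$) uses a random seed $Y$ uniform on $\{1,\dots,\mathcal{Y}\}$, independent of $v^*$, with $q_1=\phi_1(Y)$, $q_k=\phi_k(r_1,\dots,r_{k-1},Y)$, and estimate $\hat x=\phi^E(r_1,\dots,r_N,Y)\in[0,1)$; $\Phi_N$ is the set of such strategies. An adversary strategy $\psi$ maps the prior $P_{v^*}$, the learner strategy $\phi$ and the observed query sequence $\overline q=(q_1,\dots,q_N)$ (but not the responses) to a random estimate $\hat x^a\in[0,1)$; $\Psi$ denotes the set of all adversary strategies. A learner strategy $\phi\in\Phi_N$ is $(\epsilon,\delta,L)$-B-private if (1) $\mathbb{P}(|\hat x(v^*,Y)-v^*|\leq\epsilon/2)=1$ (probability over $v^*$ and $Y$), and (2) for every adversary strategy $\psi\in\Psi$, $\mathbb{P}(|\hat x^a-v^*|\leq\delta/2)\leq 1/L$ (probability over $v^*$, $Y$ and $\hat x^a$). $N_B^*(\epsilon,\delta,L)=\min\{N\in\mathbb{N}:\exists\,\phi\in\Phi_N\text{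 that is }(\epsilon,\delta,L)\text{-B-private}\}$. Logarithms are base 2 and non-integer quantities are rounded up to the nearest integer. *)

From HB Require Import structures.
From mathcomp Require Import all_boot all_order all_algebra.
From mathcomp Require Import all_classical all_reals all_analysis.
Set Implicit Arguments. Unset Strict Implicit. Unset Printing Implicit Defensive.
Import Order.TTheory GRing.Theory Num.Theory.
Local Open Scope classical_set_scope.
Local Open Scope ring_scope.

Section BPrivate.
Variable R : realType.

(* The seed Y is uniform on
   {0, ..., seeds - 1} (a relabelling of {1,...,𝒴}).  The k-th query
   (k = 1..N) is [query h y] where h = (r_1,...,r_{k-1}) is the history of
   responses; the estimate is [estimate (r_1,...,r_N) y]. *)
Record strategy (N : nat) := Strategy {
  seeds : nat;
  seeds_gt0 : (0 < seeds)%N;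
  query : seq bool -> nat -> R;
  estimate : seq bool -> nat -> R;
  query_range : forall h y, 0 <= query h y < 1;
  estimate_range : forall h y, 0 <= estimate h y < 1 }.

Fixpoint responses (q : seq bool -> R) (v : R) (n : nat) : seq bool :=
  match n with
  | 0 => [::]
  | n.+1 => let h := responses q v n in rcons h (q h <= v)
  end.

Definition queries N (phi : strategy N) (v : R) (y : nat) : seq R :=
  [seq query phi (responses (query phi ^~ y) v k) y | k <- iota 0 N].

Definition learner_estimate N (phi : strategy N) (v : R) (y : nat) : R :=
  estimate phi (responses (query phi ^~ y) v N) y.

(* P(E) for v* uniform on [0,1) and Y uniform on {0,...,seeds-1},
   independent *)
Definition probVY N (phi : strategy N) (E : R -> nat -> Prop) : \bar R :=
  ((seeds phi)%:R^-1)%:E *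
  \sum_(y < seeds phi)
     lebesgue_measure [set v : R | (0 <= v < 1)%R /\ E v y].

(* An adversary: given the observed query sequence (prior and learner
   strategy are fixed), outputs a random estimate in [0,1), described by
   its (conditional) distribution. *)
Definition adversary := seq R -> probability (measurableTypeR R) R.

Definition valid_adversary (psi : adversary) : Prop :=
  forall qs, psi qs `[0%R, 1%R[%classic = 1%E.

(* P(|x^a - v*| <= delta/2), with x^a drawn from psi(q) independently
   given the queries *)
Definition adversary_success N (phi : strategy N) (psi : adversary)
    (delta : R) : \bar R :=
  ((seeds phi)%:R^-1)%:E *
  \sum_(y < seeds phi)
    \int[lebesgue_measure]_(v in `[0%R, 1%R[)
       psi (queries phi v y) [set x : R | (`|x - v| <= delta / 2)%R].

Definition B_private N (phi : strategy N) (eps delta : R) (L : nat) : Prop :=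
  probVY phi (fun v y => `|learner_estimate phi v y - v| <= eps / 2) = 1%E
  /\ forall psi : adversary, valid_adversary psi ->
       (adversary_success phi psi delta <= (L%:R^-1)%:E)%E.

Definition is_NBstar (eps delta : R) (L N : nat) : Prop :=
  (exists phi : strategy N, B_private phi eps delta L) /\
  forall M, (exists phi : strategy M, B_private phi eps delta L) -> (N <= M)%N.

Definition log2 (x : R) : R := ln x / ln 2.

End BPrivate.

From HB Require Import structures.
From mathcomp Require Import all_boot all_order all_algebra.
From mathcomp Require Import all_classical all_reals all_analysis.
From mathcomp Require Import ring lra zify.
Set Implicit Arguments.
Unset Strict Implicit.
Unset Printing Implicit Defensive.
Import Order.TTheory GRing.Theory Num.Theory.
Local Open Scope classical_set_scope.
Local Open Scope ring_scope.

(* Lower bound: for a fixed seed the estimate is a function of the N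
   answers, which take at most 2^N values, so it is eps/2-accurate on a set
   of Lebesgue measure at most 2^N eps; accuracy with probability one
   forces 2^N eps >= 1.

   Upper bound: the replicated bisection strategy with
   m = ceil (log2 (1/(L eps))) rounds.  The first L-1 queries locate v* in a
   subinterval [k/L, (k+1)/L); each round then queries the midpoint of the
   current dyadic cell in all L subintervals at once and uses only the
   answer from subinterval k, so after L-1+mL queries v* is known to within
   2^-m/L <= eps.  The queries reveal only the m bits b of v* inside its
   subinterval, i.e. that v* lies in L intervals of length 2^-m/L spaced 1/L
   apart.  As delta <= 1/L, a window [x - delta/2, x + delta/2] meets at most
   2^-m/L of them; Tonelli integrates this bound against the adversary's
   distribution, and summing over the 2^m values of b bounds the adversary's
   success probability by 1/L. *)

Section DyadicCells.
Variable R : realFieldType.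

Definition half_pow (t : nat) : R := (2 ^+ t)^-1.

Lemma half_pow_gt0 t : 0 < half_pow t.
Proof. by rewrite invr_gt0 exprn_gt0. Qed.

Lemma half_pow0 : half_pow 0 = 1.
Proof. by rewrite /half_pow expr0 invr1. Qed.

Lemma half_powS t : half_pow t = half_pow t.+1 + half_pow t.+1.
Proof.
have halves : (2 : R)^-1 + 2^-1 = 1 by field.
by rewrite /half_pow exprS invfM -mulrDl halves mul1r.
Qed.

(* [cell_lo b t] is the left end of the dyadic cell of [0, 1) of width
   [half_pow t] selected by the bits [b 0, ..., b t.-1]. *)
Fixpoint cell_lo (b : nat -> bool) (t : nat) : R :=
  if t is t'.+1 then cell_lo b t' + (if b t' then half_pow t else 0) else 0.

Lemma cell_lo_ge0 b t : 0 <= cell_lo b t.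
Proof.
elim: t => [|t IH] //=; apply: addr_ge0 => //.
by case: (b t) => //; exact/ltW/half_pow_gt0.
Qed.

Lemma le_cell_lo b : {homo cell_lo b : t t' / (t <= t')%N >-> t <= t'}.
Proof.
apply: homo_leq => [//|y x z|t /=]; first exact: le_trans.
by rewrite lerDl; case: (b t) => //; exact/ltW/half_pow_gt0.
Qed.

Lemma le_cell_hi b :
  {homo (fun t => cell_lo b t + half_pow t) : t t' / (t <= t')%N >-> t' <= t}.
Proof.
apply: homo_leq => [//|y x z yx zy|t /=]; first exact: le_trans zy yx.
rewrite (half_powS t); have := half_pow_gt0 t.+1; case: (b t); lra.
Qed.

Lemma cell_hi_le1 b t : cell_lo b t + half_pow t <= 1.
Proof. by have := le_cell_hi b (leq0n t); rewrite /= half_pow0 add0r. Qed.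

Lemma eq_cell_lo b1 b2 t : (forall i, (i < t)%N -> b1 i = b2 i) ->
  cell_lo b1 t = cell_lo b2 t.
Proof.
elim: t => [|t IH] eqb //=; rewrite eqb // IH // => i /ltnW; exact: eqb.
Qed.

Fixpoint digit_lo (u : R) (t : nat) : R :=
  if t is t'.+1 then
    if digit_lo u t' + half_pow t <= u then digit_lo u t' + half_pow t
    else digit_lo u t'
  else 0.

Definition digit (u : R) (t : nat) : bool := digit_lo u t + half_pow t.+1 <= u.

Lemma digit_loE u t : digit_lo u t = cell_lo (digit u) t.
Proof.
elim: t => [|t IH] //=; rewrite -/(digit u t) -IH.
by case: (digit u t); rewrite ?addr0.
Qed.

Lemma digit_lo_bounds u t : 0 <= u < 1 ->
  digit_lo u t <= u < digit_lo u t + half_pow t.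
Proof.
move=> /andP[u_ge0 u_lt1]; elim: t => [|t IH]; first by rewrite /= half_pow0 add0r u_ge0.
move: IH => /andP[lo_le hi_gt] /=; rewrite (half_powS t) in hi_gt.
by case: ifP => H; apply/andP; split; lra.
Qed.

Lemma digitsP u b m : 0 <= u < 1 ->
  (forall t, (t < m)%N -> digit u t = b t) <->
  cell_lo b m <= u < cell_lo b m + half_pow m.
Proof.
move=> u01; split=> [eqb|/andP[lo_le hi_gt]].
  by rewrite -(eq_cell_lo eqb) -digit_loE; exact: digit_lo_bounds.
suff eqb : forall t, (t <= m)%N -> forall i, (i < t)%N -> digit u i = b i.
  by move=> t tm; exact: eqb tm.
elim=> [//|t IH] tm i; rewrite ltnS leq_eqVlt => /orP[/eqP->|it].
  2: exact: IH (ltnW tm) i it.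
have lo_t : digit_lo u t = cell_lo b t by rewrite digit_loE; exact/eq_cell_lo/IH/ltnW.
have lo_m := le_cell_lo b tm; have hi_m := le_cell_hi b tm.
rewrite /digit lo_t; move: lo_m hi_m => /=; case: (b t) => lo_m hi_m.
  exact: le_trans lo_m lo_le.
by apply/negbTE; rewrite -ltNge; rewrite addr0 in hi_m; exact: lt_le_trans hi_gt hi_m.
Qed.

End DyadicCells.

Arguments half_pow {R}.
Arguments cell_lo {R}.

Section PeriodicOverlap.
Variable R : realFieldType.

Definition itv_len (p q : R) : R := if p < q then q - p else 0.

Lemma itv_len_divr (p q c : R) : 0 < c ->
  itv_len (p / c) (q / c) = itv_len p q / c.
Proof.
by move=> c_gt0; rewrite /itv_len ltr_pM2r ?invr_gt0 //; case: ifP; rewrite ?mulrBl ?mul0r.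
Qed.

(* Interval [k] is [[k + a, k + a + W]] and [C] lies [e] to the right of
   the start of interval [z]; a window [C, D] of length at most 1 meets only
   intervals [z] and [z + 1]. *)
Lemma itv_len_window_le (a W C D e : R) (k z : int) :
  0 <= W <= 1 -> D - C <= 1 -> C = z%:~R + a + e -> 0 <= e < 1 ->
  itv_len (Num.max (k%:~R + a) C) (Num.min (k%:~R + a + W) D) <=
    (if k == z then Num.max (W - e) 0 else 0) +
    (if k == z + 1 then Num.min e W else 0).
Proof.
move=> /andP[W_ge0 W_le1] CD defC /andP[e_ge0 e_lt1].
set p := Num.max _ _; set q := Num.min _ _.
have [kp Cp] : k%:~R + a <= p /\ C <= p by rewrite !le_max !lexx orbT.
have [qk qD] : q <= k%:~R + a + W /\ q <= D by rewrite !ge_min !lexx orbT.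
rewrite /itv_len; case: ltP => [pq|_]; last first.
  by apply: addr_ge0; case: ifP => // _; rewrite ?le_max ?le_min ?lexx ?orbT ?e_ge0.
have [kz|[kz|[kz|zk]]] : (k + 1 <= z \/ k = z \/ k = z + 1 \/ z + 2 <= k)%R by lia.
- by have := kz; rewrite -(ler_int R) intrD; lra.
- subst k; rewrite eqxx (_ : (z == z + 1) = false) ?addr0 ?le_max; last by lia.
  by apply/orP; left; lra.
- subst k; rewrite eqxx (_ : (z + 1 == z) = false) ?add0r ?le_min; last by lia.
  by rewrite intrD in kp qk; apply/andP; split; lra.
- by have := zk; rewrite -(ler_int R) intrD; lra.
Qed.

End PeriodicOverlap.

Section PeriodicOverlapSum.
Variable R : archiRealFieldType.

Lemma sum_if_eq_le n (z : int) (A : R) : 0 <= A ->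
  \sum_(k < n) (if k%:Z == z then A else 0) <= A.
Proof.
move=> A_ge0; case: z => [j|j]; last by rewrite big1.
rewrite -big_mkcond /= (eq_bigl (fun k : 'I_n => k == j :> nat)) // big_ord1_eq.
by case: ifP.
Qed.

Lemma sum_itv_len_window_le (a W C D : R) n : 0 <= W <= 1 -> D - C <= 1 ->
  \sum_(k < n) itv_len (Num.max (k%:R + a) C) (Num.min (k%:R + a + W) D) <= W.
Proof.
move=> W01 CD; set z := Num.floor (C - a); set e := C - a - z%:~R.
have e01 : 0 <= e < 1.
  by rewrite /e subr_ge0 floor_le /=; have := floorD1_gt (C - a); rewrite intrD; lra.
have defC : C = z%:~R + a + e by rewrite /e; lra.
apply: le_trans.
  by apply: ler_sum => k _; exact: (@itv_len_window_le _ a W C D e k z W01 CD defC e01).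
rewrite big_split /=; apply: le_trans (lerD (sum_if_eq_le _ _ _) (sum_if_eq_le _ _ _)) _.
- by rewrite le_max lexx orbT.
- by rewrite le_min; case/andP: e01 W01 => -> _ /andP[->].
- by rewrite maxEle minEle; case: ifP; case: ifP; lra.
Qed.

End PeriodicOverlapSum.

Lemma integral_xsection_le d1 d2 (T1 : measurableType d1) (T2 : measurableType d2)
    (R : realType) (mu : {sigma_finite_measure set T1 -> \bar R})
    (P : probability T2 R) (A : set (T1 * T2)) (c : R) :
  measurable A -> (forall y, (mu (ysection A y) <= c%:E)%E) ->
  (\int[mu]_x (P \o xsection A) x <= c%:E)%E.
Proof.
move=> mA secA.
rewrite -(indic_fubini_tonelli_FE P mA) (indic_fubini_tonelli mu P mA).
rewrite (indic_fubini_tonelli_GE mu mA).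
apply: le_trans (_ : \int[P]_y cst c%:E y <= _)%E.
  apply: ge0_le_integral => //; first exact: measurable_fun_ysection.
  by move=> y _; exact: secA.
by rewrite integral_cst // (_ : _ setT = 1%E) ?mule1 //; exact: probability_setT.
Qed.

(* [lebesgue_measure] is the outer measure, defined on all sets; the lower
   bound needs this, as the sets it measures need not be measurable. *)
Section LebesgueOuterMeasure.
Variable R : realType.

Lemma le_lebesgue_measure (A B : set R) : A `<=` B ->
  (lebesgue_measure A <= lebesgue_measure B)%E.
Proof. exact: (le_mu_ext (wlength idfun)). Qed.

Lemma lebesgue_measureU2 (A B : set R) :
  (lebesgue_measure (A `|` B) <= lebesgue_measure A + lebesgue_measure B)%E.
Proof. exact: (outer_measureU2 (mu_ext (wlength (idfun : R -> R)))). Qed.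

Lemma lebesgue_measure_subadditive (F : nat -> set R) n :
  (lebesgue_measure (\big[setU/set0]_(i < n) F i) <=
   \sum_(i < n) lebesgue_measure (F i))%E.
Proof. exact: (outer_measure_subadditive (mu_ext (wlength (idfun : R -> R)))). Qed.

Lemma lebesgue_measure_itv_len (p q : R) :
  lebesgue_measure `[p, q]%classic = (itv_len p q)%:E.
Proof. by rewrite lebesgue_measure_itv /= lte_fin /itv_len; case: ifP; rewrite ?EFinB. Qed.

End LebesgueOuterMeasure.

Lemma count_ltn_iota K n : count (fun i => (i < K)%N) (iota 0 n) = minn K n.
Proof.
elim: n => [|n IH]; first by rewrite minn0.
by rewrite -addn1 iotaD count_cat IH /= add0n addn0; lia.
Qed.

Section ReplicatedBisection.
Variables (R : realType) (L : nat).
Hypothesis L_gt0 : (0 < L)%N.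

Let LR_gt0 : (0 : R) < L%:R. Proof. by rewrite ltr0n. Qed.

(* Queries [0, ..., L-2] are [1/L, ..., (L-1)/L]; query [L-1 + t L + j] is
   the midpoint of the depth-[t] dyadic cell with bits [c], scaled into the
   subinterval [[j/L, (j+1)/L)].  The number [k] of yes answers to the first
   [L-1] queries locates [v*] in subinterval [k], and bit [t] is read off
   the answer to query [L-1 + t L + k]. *)
Definition rb_mid (c : nat -> bool) (k t : nat) : R :=
  (k%:R + cell_lo c t + half_pow t.+1) / L%:R.

Definition rb_point (c : nat -> bool) (n : nat) : R :=
  if (n < L.-1)%N then n.+1%:R / L%:R
  else rb_mid c ((n - L.-1) %% L) ((n - L.-1) %/ L).

Definition rb_guess (h : seq bool) : nat := count id (take L.-1 h).

Definition rb_bits (h : seq bool) (t : nat) : bool :=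
  nth false h (L.-1 + t * L + rb_guess h).

Definition rb_query (h : seq bool) : R := rb_point (rb_bits h) (size h).

Definition rb_estimate (m : nat) (h : seq bool) : R :=
  rb_mid (rb_bits h) (rb_guess h) m.

Lemma rb_mid_range c k t : (k < L)%N -> 0 <= rb_mid c k t < 1.
Proof.
move=> kL; have k1_le : (k%:R : R) + 1 <= L%:R by rewrite natr1 ler_nat.
have k_ge0 : (0 : R) <= k%:R := ler0n _ k.
have := cell_lo_ge0 R c t; have := cell_hi_le1 R c t; have := half_pow_gt0 R t.+1.
rewrite (half_powS R t) => w_gt0 hi_le1 lo_ge0.
apply/andP; split; first by apply: divr_ge0; rewrite ?ler0n //; lra.
by rewrite ltr_pdivrMr // mul1r; lra.
Qed.

Lemma rb_point_range c n : 0 <= rb_point c n < 1.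
Proof.
rewrite /rb_point; case: ltnP => [nL|_]; last by apply: rb_mid_range; rewrite ltn_mod.
by rewrite divr_ge0 ?ltW //= ltr_pdivrMr // mul1r ltr_nat; lia.
Qed.

Lemma rb_guess_lt h : (rb_guess h < L)%N.
Proof.
rewrite /rb_guess; apply: leq_ltn_trans (count_size _ _) _.
by rewrite size_take; case: ifP; lia.
Qed.

Definition rb_strategy (m : nat) : strategy R (L.-1 + m * L) :=
  @Strategy R _ 1 erefl (fun h _ => rb_query h) (fun h _ => rb_estimate m h)
    (fun h _ => rb_point_range _ _) (fun h _ => rb_mid_range _ _ (rb_guess_lt h)).

Lemma rb_point_block c k t : (k < L)%N -> rb_point c (L.-1 + t * L + k) = rb_mid c k t.
Proof.
move=> kL; rewrite /rb_point ifF; last by apply/negbTE; lia.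
have -> : (L.-1 + t * L + k - L.-1 = t * L + k)%N by lia.
by rewrite modnMDl (modn_small kL) divnMDl // (divn_small kL) addn0.
Qed.

Lemma eq_rb_point c1 c2 n : (forall t, (t < (n - L.-1) %/ L)%N -> c1 t = c2 t) ->
  rb_point c1 n = rb_point c2 n.
Proof. by move=> eqc; rewrite /rb_point /rb_mid (eq_cell_lo R eqc). Qed.

Definition sub_index (v : R) : nat := `|Num.floor (L%:R * v)|%N.

Definition sub_offset (v : R) : R := L%:R * v - (sub_index v)%:R.

Lemma sub_index_bounds v : 0 <= v < 1 ->
  [/\ (sub_index v < L)%N, (sub_index v)%:R <= L%:R * v
    & L%:R * v < (sub_index v)%:R + 1].
Proof.
move=> /andP[v_ge0 v_lt1].
have floor_ge0 : 0 <= Num.floor (L%:R * v) by rewrite floor_ge0 mulr_ge0.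
have indexE : ((sub_index v)%:R : R) = (Num.floor (L%:R * v))%:~R.
  by rewrite natr_absz ger0_norm.
have lt_floor1 := floorD1_gt (L%:R * v); rewrite intrD in lt_floor1.
rewrite indexE floor_le; split=> //; rewrite -(ltr_nat R) indexE.
by apply: le_lt_trans (floor_le _) _; rewrite gtr_pMr.
Qed.

Lemma sub_offset_range v : 0 <= v < 1 -> 0 <= sub_offset v < 1.
Proof. by case/sub_index_bounds=> _ lo hi; rewrite /sub_offset; apply/andP; split; lra. Qed.

Lemma rb_mid_sub_indexE c t v :
  rb_mid c (sub_index v) t - v = (cell_lo c t + half_pow t.+1 - sub_offset v) / L%:R.
Proof. by rewrite /rb_mid /sub_offset; field; rewrite gt_eqF. Qed.

Definition rb_answers (v : R) (n : nat) : seq bool :=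
  mkseq (fun i => rb_point (digit (sub_offset v)) i <= v) n.

Lemma rb_guess_answers v n : 0 <= v < 1 -> (L.-1 <= n)%N ->
  rb_guess (rb_answers v n) = sub_index v.
Proof.
move=> v01 Ln; have [kL lo hi] := sub_index_bounds v01.
rewrite /rb_guess /rb_answers /mkseq -map_take take_iota (minn_idPl Ln) count_map.
rewrite (@eq_in_count _ _ (fun i => (i < sub_index v)%N)); last first.
  move=> i; rewrite mem_iota add0n => /andP[_ iL] /=.
  rewrite /rb_point iL ler_pdivrMr // mulrC.
  case: (leqP i.+1 (sub_index v)) => ik.
    by apply: le_trans lo; rewrite ler_nat.
  by apply/negbTE; rewrite -ltNge; apply: lt_le_trans hi _; rewrite natr1 ler_nat.
by rewrite count_ltn_iota; apply/minn_idPl; lia.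
Qed.

Lemma rb_bits_answers v n i : 0 <= v < 1 -> (L.-1 + i.+1 * L <= n)%N ->
  rb_bits (rb_answers v n) i = digit (sub_offset v) i.
Proof.
move=> v01 iLn; have [kL _ _] := sub_index_bounds v01.
rewrite /rb_bits rb_guess_answers //; last by lia.
rewrite nth_mkseq; last by rewrite mulSn in iLn; lia.
rewrite rb_point_block // /digit digit_loE.
by rewrite -subr_le0 rb_mid_sub_indexE ler_pdivrMr // mul0r subr_le0.
Qed.

Lemma rb_query_answers v n : 0 <= v < 1 ->
  rb_query (rb_answers v n) = rb_point (digit (sub_offset v)) n.
Proof.
move=> v01; rewrite /rb_query size_mkseq; apply: eq_rb_point => t.
rewrite leq_divRL // => tL; apply: rb_bits_answers => //.
by move: tL; rewrite !mulSn; lia.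
Qed.

Lemma responses_rb v n : 0 <= v < 1 -> responses rb_query v n = rb_answers v n.
Proof.
by move=> v01; elim: n => [|n IH] //=; rewrite IH rb_query_answers // /rb_answers mkseqS.
Qed.

Lemma rb_estimate_answers m v : 0 <= v < 1 ->
  `|rb_estimate m (rb_answers v (L.-1 + m * L)) - v| <= half_pow m.+1 / L%:R.
Proof.
move=> v01; rewrite /rb_estimate rb_guess_answers ?leq_addr //.
rewrite /rb_mid (@eq_cell_lo R _ (digit (sub_offset v))) -/(rb_mid _ _ _); last first.
  by move=> i im; rewrite rb_bits_answers // leq_add2l leq_mul2r im orbT.
rewrite rb_mid_sub_indexE normrM [`|_^-1|]ger0_norm ?invr_ge0 //.
rewrite ler_pM2r ?invr_gt0 //.
have /andP[lo hi] := digit_lo_bounds m (sub_offset_range v01).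
rewrite -digit_loE ler_norml; have := half_powS R m; lra.
Qed.

Lemma rb_accurate m eps : half_pow m / L%:R <= eps ->
  probVY (rb_strategy m)
    (fun v y => `|learner_estimate (rb_strategy m) v y - v| <= eps / 2) = 1%E.
Proof.
move=> cell_le; rewrite /probVY /= big_ord1 invr1 mul1e.
rewrite (_ : [set v | _] = `[0, 1[%classic).
  by rewrite lebesgue_measure_itv /= lte_fin ltr01 oppr0 adde0.
apply/seteqP; split=> v /=; rewrite in_itv /=; first by case.
move=> v01; split=> //; rewrite /learner_estimate /= responses_rb //.
apply: le_trans (rb_estimate_answers m v01) _.
move: cell_le; rewrite !ler_pdivrMr //; have := half_powS R m; lra.
Qed.

Definition rb_cell m (b : m.-tuple bool) : set R :=
  [set v | 0 <= v < 1 /\ forall t, (t < m)%N -> digit (sub_offset v) t = nth false b t].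

Definition rb_cell_bits m (v : R) : m.-tuple bool := [tuple digit (sub_offset v) t | t < m].

Lemma rb_cell_bitsP m v : 0 <= v < 1 -> rb_cell (rb_cell_bits m v) v.
Proof. by move=> v01; split=> // t tm; rewrite -[t]/(val (Ordinal tm)) nth_mktuple. Qed.

Lemma rb_cell_uniq m (b b' : m.-tuple bool) v : rb_cell b v -> rb_cell b' v -> b = b'.
Proof.
move=> [_ eqb] [_ eqb']; apply: eq_from_tnth => t.
by rewrite !(tnth_nth false) -eqb // eqb'.
Qed.

Lemma rb_cellE m (b : m.-tuple bool) : rb_cell b =
  \bigcup_(k in `I_L) `[(k%:R + cell_lo (nth false b) m) / L%:R,
                        (k%:R + cell_lo (nth false b) m + half_pow m) / L%:R[%classic.
Proof.
apply/seteqP; split=> v.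
  move=> [v01 /(digitsP _ _ (sub_offset_range v01)) /andP[lo hi]].
  have [kL k_le k_gt] := sub_index_bounds v01.
  exists (sub_index v) => //=; rewrite in_itv /= ler_pdivrMr // ltr_pdivlMr //.
  by rewrite /sub_offset in lo hi; apply/andP; split; lra.
move=> [k /= kL]; rewrite in_itv /= ler_pdivrMr // ltr_pdivlMr // => /andP[lo hi].
have k1_le : (k%:R : R) + 1 <= L%:R by rewrite natr1 ler_nat.
have k_ge0 : (0 : R) <= k%:R := ler0n _ k.
have := cell_lo_ge0 R (nth false b) m; have := cell_hi_le1 R (nth false b) m.
have := half_pow_gt0 R m => w_gt0 hi_le1 lo_ge0.
have v01 : 0 <= v < 1.
  rewrite -(pmulr_lge0 _ LR_gt0) -(ltr_pM2r LR_gt0) mul1r.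
  by apply/andP; split; lra.
have kE : sub_index v = k.
  by rewrite /sub_index (@floor_def _ _ k%:Z) // intrD; apply/andP; split; lra.
split=> //; apply/digitsP; first exact: sub_offset_range.
by rewrite /sub_offset kE; apply/andP; split; lra.
Qed.

Definition rb_cell_queries m (b : m.-tuple bool) : seq R :=
  [seq rb_point (nth false b) n | n <- iota 0 (L.-1 + m * L)].

Lemma queries_rb_cell m (b : m.-tuple bool) v y :
  rb_cell b v -> queries (rb_strategy m) v y = rb_cell_queries b.
Proof.
move=> [v01 eqb]; apply/eq_in_map => n; rewrite mem_iota add0n => /andP[_ nN] /=.
rewrite responses_rb // rb_query_answers //; apply: eq_rb_point => t tn; apply: eqb.
rewrite -(ltn_pmul2r L_gt0); move: tn; rewrite leq_divRL // mulSn; lia.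
Qed.

Lemma rb_cell_measurable m (b : m.-tuple bool) : measurable (rb_cell b).
Proof. by rewrite rb_cellE; apply: bigcup_measurable => k _; exact: measurable_itv. Qed.

Definition rb_hit m (b : m.-tuple bool) (delta : R) : set (R * R) :=
  [set p | rb_cell b p.1 /\ `|p.2 - p.1| <= delta / 2].

Lemma rb_hit_measurable m (b : m.-tuple bool) delta :
  measurable (rb_hit b delta : set (measurableTypeR R * measurableTypeR R)).
Proof.
have dist_mfun : measurable_fun setT (fun p : R * R => `|p.2 - p.1|).
  apply: measurableT_comp; first exact: measurable_realfun.normr_measurable.
  exact: measurable_realfun.measurable_funB.
rewrite (_ : rb_hit b delta =
  rb_cell b `*` setT `&` (setT `&` (fun p => `|p.2 - p.1|) @^-1` `]-oo, delta / 2])).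
  apply: measurableI; first exact: measurableX (rb_cell_measurable b) measurableT.
  by apply: dist_mfun => //; exact: measurable_itv.
apply/seteqP; split=> p /=; rewrite in_itv /=.
  by move=> [cell_p dist_p].
by move=> [[cell_p _] [_ dist_p]].
Qed.

Lemma rb_hit_ysection_le m (b : m.-tuple bool) delta x : delta <= L%:R^-1 ->
  (lebesgue_measure (ysection (rb_hit b delta) x) <= (half_pow m / L%:R)%:E)%E.
Proof.
move=> delta_le.
pose a := cell_lo (nth false b) m : R.
pose C := (x - delta / 2) * L%:R; pose D := (x + delta / 2) * L%:R.
pose J k := `[Num.max (k%:R + a) C / L%:R, Num.min (k%:R + a + half_pow m) D / L%:R]%classic.
have cover : ysection (rb_hit b delta) x `<=` \big[setU/set0]_(k < L) J k.
  move=> v; rewrite /ysection /= inE => -[]; rewrite rb_cellE => -[k /= kL].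
  rewrite in_itv /= ler_pdivrMr // ltr_pdivlMr // => /andP[lo hi].
  rewrite ler_norml => /andP[dist_lo dist_hi].
  rewrite -bigcup_mkord; exists k => //; rewrite /J /a /= in_itv /=.
  rewrite ler_pdivrMr // ler_pdivlMr // ge_max le_min lo (ltW hi) /C /D !ler_pM2r //.
  by apply/andP; split; lra.
apply: le_trans (le_lebesgue_measure cover) _.
apply: le_trans (lebesgue_measure_subadditive _ _) _.
under eq_bigr do rewrite lebesgue_measure_itv_len itv_len_divr //.
rewrite sumEFin lee_fin -mulr_suml ler_pM2r ?invr_gt0 //.
apply: sum_itv_len_window_le.
  have := cell_lo_ge0 R (nth false b) m; have := cell_hi_le1 R (nth false b) m.
  by have := half_pow_gt0 R m; move=> *; apply/andP; split; lra.
by move: delta_le; rewrite /C /D -div1r ler_pdivlMr //; lra.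
Qed.

Lemma rb_success_integrandE m delta (psi : adversary R) v y : 0 <= v < 1 ->
  psi (queries (rb_strategy m) v y) [set x | `|x - v| <= delta / 2] =
  \sum_(b : m.-tuple bool) psi (rb_cell_queries b) (xsection (rb_hit b delta) v).
Proof.
move=> v01; rewrite (bigD1 (rb_cell_bits m v)) //= big1 ?adde0.
  rewrite (queries_rb_cell y (rb_cell_bitsP m v01)); congr (psi _ _).
  apply/seteqP; split=> x; rewrite /xsection /= inE /rb_hit /=; last by case.
  by split=> //; exact: rb_cell_bitsP.
move=> b b_ne; rewrite (_ : xsection _ v = set0) ?measure0 //.
apply/seteqP; split=> x //; rewrite /xsection /= inE => -[cell_b _].
by move/eqP: b_ne; apply; exact: rb_cell_uniq cell_b (rb_cell_bitsP m v01).
Qed.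

Lemma rb_private m delta (psi : adversary R) : delta <= L%:R^-1 ->
  (adversary_success (rb_strategy m) psi delta <= (L%:R^-1)%:E)%E.
Proof.
move=> delta_le; rewrite /adversary_success /= big_ord1 invr1 mul1e.
have integrandE : {in `[0, 1[%classic, (fun v =>
    \sum_(b : m.-tuple bool) (psi (rb_cell_queries b) \o xsection (rb_hit b delta)) v)
  =1 (fun v => psi (queries (rb_strategy m) v 0) [set x | `|x - v| <= delta / 2])}.
  by move=> v; rewrite inE /= in_itv /= => v01; rewrite rb_success_integrandE.
rewrite -(@eq_integral _ _ _ lebesgue_measure _ _ _ integrandE).
have xsec_mfun (b : m.-tuple bool) :=
  measurable_fun_xsection (psi (rb_cell_queries b)) (rb_hit_measurable b delta).
apply: le_trans.
  apply: (ge0_subset_integral _ _ measurableT) => //.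
  - by apply: emeasurable_sum => b; exact: xsec_mfun.
  - by move=> v _; apply: sume_ge0 => b _; exact: measure_ge0.
rewrite /= (ge0_integral_sum _ measurableT xsec_mfun); last by move=> *; exact: measure_ge0.
apply: le_trans.
  apply: lee_sum => b _; apply: integral_xsection_le; first exact: rb_hit_measurable.
  by move=> x; exact: rb_hit_ysection_le.
rewrite sumEFin lee_fin big_const card_tuple card_bool iter_addr addr0.
rewrite -(mulr_natr (half_pow m / L%:R)) natrX /half_pow.
by rewrite mulrAC mulVf ?mul1r // expf_neq0.
Qed.

Lemma rb_B_private m eps delta :
  half_pow m / L%:R <= eps -> delta <= L%:R^-1 -> B_private (rb_strategy m) eps delta L.
Proof.
by move=> cell_le delta_le; split=> [|psi _]; [exact: rb_accurate | exact: rb_private].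
Qed.

End ReplicatedBisection.

Section LowerBound.
Variable R : realType.

Lemma lebesgue_measure_accurate_le (q e : seq bool -> R) (eps : R) n : 0 <= eps ->
  (lebesgue_measure [set v | `|e (responses q v n) - v| <= eps / 2]%R <=
   (2 ^+ n * eps)%:E)%E.
Proof.
move=> eps_ge0; elim: n e => [|n IH] e.
  apply: le_trans (le_lebesgue_measure (_ : _ `<=` `[e [::] - eps / 2, e [::] + eps / 2])) _.
    by move=> v /=; rewrite in_itv /= ler_norml => /andP[lo hi]; apply/andP; split; lra.
  by rewrite lebesgue_measure_itv_len lee_fin expr0 mul1r /itv_len; case: ifP; lra.
pose acc (b : bool) := [set v | `|e (rcons (responses q v n) b) - v| <= eps / 2].
apply: le_trans (le_lebesgue_measure (_ : _ `<=` acc true `|` acc false)) _.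
  by move=> v /=; case: (q (responses q v n) <= v) => acc_v; [left | right].
apply: le_trans (lebesgue_measureU2 _ _) _.
apply: le_trans (leeD (IH (fun h => e (rcons h true))) (IH (fun h => e (rcons h false)))) _.
by rewrite -EFinD lee_fin exprS; lra.
Qed.

Lemma B_private_lower_bound N (phi : strategy R N) (eps delta : R) (L : nat) :
  0 < eps -> B_private phi eps delta L -> 1 <= 2 ^+ N * eps.
Proof.
move=> eps_gt0 [accurate _]; move: accurate; rewrite /probVY => accurate.
have seeds_gt0 : 0 < ((seeds phi)%:R : R) by rewrite ltr0n seeds_gt0.
have accurate_le y :
    (lebesgue_measure [set v | 0 <= v < 1 /\
       `|learner_estimate phi v y - v| <= eps / 2]%R <= (2 ^+ N * eps)%:E)%E.
  apply: le_trans (lebesgue_measure_accurate_le (fun h => query phi h y)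
    (fun h => estimate phi h y) N (ltW eps_gt0)).
  by apply: le_lebesgue_measure => v [].
rewrite -lee_fin -accurate.
apply: (@le_trans _ _ (((seeds phi)%:R^-1)%:E * \sum_(y < seeds phi) (2 ^+ N * eps)%:E)%E).
  apply: lee_wpmul2l; first by rewrite lee_fin invr_ge0 ltW.
  by apply: lee_sum => y _; exact: accurate_le.
rewrite sumEFin sumr_const card_ord -EFinM lee_fin -(mulr_natr (2 ^+ N * eps)).
by rewrite mulrCA mulVf ?mulr1 ?gt_eqF.
Qed.

End LowerBound.

Lemma log2_le_nat (R : realType) (x : R) (n : nat) : 0 < x ->
  (log2 x <= n%:R) = (x <= 2 ^+ n).
Proof.
move=> x_gt0; have ln2_gt0 : 0 < ln (2 : R) by apply: ln_gt0; lra.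
by rewrite /log2 ler_pdivrMr // mulr_natl -lnXn // ler_ln ?posrE ?exprn_gt0.
Qed.

Lemma half_pow_ceil_log2_le (R : realType) (x : R) : 0 < x ->
  half_pow `|Num.ceil (log2 x^-1)|%N <= x.
Proof.
move=> x_gt0; rewrite /half_pow -[leRHS]invrK lef_pV2 ?posrE ?exprn_gt0 ?invr_gt0 //.
rewrite -log2_le_nat ?invr_gt0 //.
by apply: le_trans (ceil_ge _) _; rewrite natr_absz ler_int ler_norm.
Qed.

Lemma log2_ge0 (R : realType) (x : R) : 1 <= x -> 0 <= log2 x.
Proof. by move=> x_ge1; rewrite divr_ge0 ?ln_ge0 //; lra. Qed.

Lemma is_NBstar_exists (R : realType) (eps delta : R) (L n : nat) :
  (exists phi : strategy R n, B_private phi eps delta L) ->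
  exists2 N, is_NBstar eps delta L N & (N <= n)%N.
Proof.
pose P N := `[< exists phi : strategy R N, B_private phi eps delta L >].
move=> /asboolP P_n; have [N /asboolP P_N N_min] := ex_minnP (ex_intro P n P_n).
by exists N; [split=> // M /asboolP; exact: N_min | exact: N_min].
Qed.

Theorem proposition3 (R : realType) (eps delta : R) (L : nat) :
  0 < eps -> 0 < delta -> (2 <= L)%N ->
  2 * eps < delta -> delta <= L%:R^-1 ->
  exists N : nat, is_NBstar eps delta L N /\
    log2 (eps^-1) <= N%:R /\
    N%:R <= (L%:R : R) * ((Num.ceil (log2 ((L%:R * eps)^-1)))%:~R : R) + L%:R - 1.
Proof.
move=> eps_gt0 _ L_ge2 eps_delta delta_le.
have L_gt0 : (0 < L)%N by apply: leq_trans L_ge2.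
have LR_gt0 : (0 : R) < L%:R by rewrite ltr0n.
have Leps_le1 : L%:R * eps <= 1.
  have : L%:R * eps <= L%:R * delta by rewrite ler_pM2l //; lra.
  by move: delta_le; rewrite -div1r ler_pdivlMr // mulrC; lra.
set c := Num.ceil _; have c_ge0 : 0 <= c.
  by rewrite ceil_ge0 (lt_le_trans _ (log2_ge0 _)) ?invf_ge1 ?mulr_gt0 ?ltrN10.
set m := `|c|%N; have mE : m%:R = c%:~R :> R by rewrite natr_absz ger0_norm.
have [N NB_N N_le] : exists2 N, is_NBstar eps delta L N & (N <= L.-1 + m * L)%N.
  apply: is_NBstar_exists; exists (rb_strategy R L_gt0 m); apply: rb_B_private => //.
  by rewrite ler_pdivrMr // mulrC; apply: half_pow_ceil_log2_le; rewrite mulr_gt0.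
exists N; split=> //; split.
  have [[phi private_phi] _] := NB_N.
  rewrite log2_le_nat ?invr_gt0 // -(ler_pM2r eps_gt0) mulVf ?gt_eqF //.
  exact: B_private_lower_bound private_phi.
apply: le_trans (_ : ((L.-1 + m * L)%N%:R : R) <= _); first by rewrite ler_nat.
have predLE : (L.-1%:R : R) = L%:R - 1 by rewrite -{2}(prednK L_gt0) -natr1 addrK.
by rewrite natrD natrM mE predLE; lra.
Qed.
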